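(* Let $\Phi=(G,\varphi)$ be a complex unit gain graph of order $n$. Then $$r(G)-2\theta(G)\leq r(\Phi)\leq r(G)+2\theta(G).$$
   Context: A complex unit gain graph ($\mathbb{T}$-gain graph) $\Phi=(G,\varphi)$ consists of a finite simple graph $G$ (the underlying graph) with vertex set $\{v_1,\dots,v_n\}$ and a gain function $\varphi$ assigning to each oriented edge $e_{ij}$ (from $v_i$ to $v_j$, where $v_iv_j\in E(G)$) a complex number $\varphi(e_{ij})$ of modulus $1$, with $\varphi(e_{ji})=\varphi(e_{ij})^{-1}=\overline{\varphi(e_{ij})}$. The adjacency matrix $A(\Phi)$ is the $n\times n$ Hermitian matrix whose $(i,j)$ entry is $\varphi(e_{ij})$ if $v_iv_j\in E(G)$ and $0$ otherwise; $r(\Phi)$ denotes the rank of $A(\Phi)$. $r(G)$ denotes the rank of the ($0$-$1$) adjacency matrix of $G$. $\theta(G)=|E(G)|-|V(G)|+\omega(G)$ is the dimension of the cycle space of $G$, where $\omega(G)$ is the number of connected components of $G$. *)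

From mathcomp Require Import all_boot all_algebra.
From mathcomp Require Import complex reals.
Set Implicit Arguments. Unset Strict Implicit. Unset Printing Implicit Defensive.
Import GRing.Theory Num.Theory.
Local Open Scope ring_scope.
Local Open Scope complex_scope.

Definition simple_graph (n : nat) (adj : rel 'I_n) : Prop :=
  (forall i j, adj i j = adj j i) /\ (forall i, ~~ adj i i).

(* phi i j is the gain of the oriented edge e_ij (only meaningful when
   adj i j); gains have modulus 1 and phi(e_ji) = phi(e_ij)^-1 = conj. *)
Definition unit_gain (R : realType) (n : nat) (adj : rel 'I_n)
  (phi : 'I_n -> 'I_n -> R[i]) : Prop :=
  forall i j, adj i j -> `|phi i j| = 1 /\ phi j i = (phi i j)^-1.

Definition gain_adj (R : realType) (n : nat) (adj : rel 'I_n)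
  (phi : 'I_n -> 'I_n -> R[i]) : 'M[R[i]]_n :=
  \matrix_(i, j) (if adj i j then phi i j else 0).

Definition adj01 (F : nzRingType) (n : nat) (adj : rel 'I_n) : 'M[F]_n :=
  \matrix_(i, j) (if adj i j then 1 else 0).

Definition nedges (n : nat) (adj : rel 'I_n) : nat :=
  #|[set p : 'I_n * 'I_n | adj p.1 p.2 && (p.1 < p.2)%N]|.

Definition ncomp (n : nat) (adj : rel 'I_n) : nat :=
  n_comp (connect adj) 'I_n.

Definition theta (n : nat) (adj : rel 'I_n) : int :=
  (nedges adj)%:Z - n%:Z + (ncomp adj)%:Z.

From mathcomp Require Import all_boot all_algebra.
From mathcomp Require Import complex reals.
From mathcomp Require Import zify ring.
Import mathcomp.order.order.Order.TTheory GRing.Theory Num.Theory.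
Local Open Scope ring_scope.
Set Implicit Arguments. Unset Strict Implicit.

(* Both bounds follow from rank A(phi) <= rank A(psi) + 2 theta(G) for any two
   gain functions phi, psi with nonzero gains and phi(e_ji) = phi(e_ij)^-1, one
   of them being the all-ones gain.  If an edge uv lies
   on a cycle, delete the vertex u: rank A(phi) drops by at most 2, rank A(psi)
   does not grow, and theta drops by at least 1 since
   theta(G - u) <= theta(G - uv) = theta(G) - 1.  Otherwise G is a forest, on
   which any two gain functions are switching equivalent, so that
   A(phi) = D^-1 A(psi) D with D diagonal, and theta(G) >= 0. *)

Lemma proper_subrel_ind (T : finType) (P : rel T -> Prop) :
  (forall e, (forall e' x y, subrel e' e -> e x y -> ~~ e' x y -> P e') -> P e) ->
  forall e, P e.
Proof.
move=> IH e; have [k] := ubnP #|[pred p : T * T | e p.1 p.2]|.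
elim: k e => // k IHk e lt_e_k; apply: IH => e' x y sub_e' exy e'xy.
suff lt_e' : (#|[pred p : T * T | e' p.1 p.2]| < #|[pred p : T * T | e p.1 p.2]|)%N.
  by apply: IHk; exact: leq_trans lt_e' lt_e_k.
apply: proper_card; apply/properP; split.
  by apply/subsetP => -[a b] /sub_e'.
by exists (x, y); rewrite inE ?exy.
Qed.

Lemma connect_mono (T : finType) (e e' : rel T) :
  subrel e e' -> subrel (connect e) (connect e').
Proof. by move=> sub; apply: connect_sub => a b /sub/connect1. Qed.

Section RemoveEdge.

Variables (T : finType) (e : rel T) (u v : T).

Definition rem_edge : rel T :=
  fun x y => e x y && ~~ ((x == u) && (y == v) || (x == v) && (y == u)).

Lemma rem_edge_sub : subrel rem_edge e.
Proof. by move=> x y /andP[]. Qed.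

Lemma rem_edge_notin : ~~ rem_edge u v.
Proof. by rewrite /rem_edge !eqxx andbF. Qed.

Lemma rem_edge_removed x y : e x y -> ~~ rem_edge x y ->
  (x == u) && (y == v) || (x == v) && (y == u).
Proof. by rewrite /rem_edge => ->; rewrite negbK. Qed.

Hypothesis sym_e : symmetric e.

Lemma rem_edge_sym : symmetric rem_edge.
Proof.
move=> x y; rewrite /rem_edge sym_e.
by case: (x == u); case: (y == v); case: (x == v); case: (y == u); rewrite ?orbT.
Qed.

Let near w := connect rem_edge w u || connect rem_edge w v.

Lemma connect_rem_edge a b :
  connect e a b -> connect rem_edge a b || near a && near b.
Proof.
have sym_f := sym_connect_sym rem_edge_sym.
have near_conn x y : connect rem_edge x y -> near y -> near x.
  by move=> xy /orP[] yw; rewrite /near (connect_trans xy yw) ?orbT.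
case/connectP=> p + ->; elim: p a => [|c p IH] a /=; first by rewrite connect0.
case/andP=> eac /IH {IH}.
have : connect rem_edge a c || near a && near c.
  case fac: (rem_edge a c); first by rewrite connect1.
  by case/orP: (rem_edge_removed eac (negbT fac)) => /andP[/eqP-> /eqP->];
    rewrite /near !connect0 ?orbT.
case/orP=> [ac | /andP[na nc]] /orP[cl | /andP[nc' nl]].
- by rewrite (connect_trans ac cl).
- by rewrite (near_conn _ _ ac nc') nl orbT.
- by rewrite na (near_conn _ c) ?orbT // sym_f.
- by rewrite na nl orbT.
Qed.

Lemma n_comp_rem_edge : (n_comp rem_edge T <= (n_comp e T).+1)%N.
Proof.
have sym_f := sym_connect_sym rem_edge_sym.
have sym_ce := sym_connect_sym sym_e.
pose z := fingraph.root rem_edge v.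
have roots_near r : r != z -> roots rem_edge r -> near r -> connect rem_edge r u.
  move=> rz root_r /orP[] // rv; move: rz.
  by rewrite /z -(fingraph.rootP sym_f rv) (eqP root_r) eqxx.
have -> : n_comp rem_edge T = #|[set r | roots rem_edge r]|.
  by apply: eq_card => x; rewrite !inE andbT.
have -> : n_comp e T = #|[set r | roots e r]|.
  by apply: eq_card => x; rewrite !inE andbT.
rewrite (cardsD1 z) addnC -addn1; apply: leq_add _ (leq_b1 _).
rewrite -(card_in_imset (f := fingraph.root e)); last first.
  move=> r1 r2; rewrite !inE => /andP[r1z r1A] /andP[r2z r2A] /eqP.
  rewrite (root_connect sym_ce) => /connect_rem_edge /orP[].
    by rewrite -(root_connect sym_f) (eqP r1A) (eqP r2A) => /eqP.
  case/andP=> /(roots_near _ r1z r1A) r1u /(roots_near _ r2z r2A) r2u.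
  have : connect rem_edge r1 r2 by rewrite (connect_trans r1u) // sym_f.
  by rewrite -(root_connect sym_f) (eqP r1A) (eqP r2A) => /eqP.
apply: subset_leq_card; apply/subsetP => r /imsetP[x _ ->].
by rewrite inE roots_root.
Qed.

Lemma n_comp_rem_edge_cycle :
  connect rem_edge u v -> n_comp rem_edge T = n_comp e T.
Proof.
move=> cuv; have sym_f := sym_connect_sym rem_edge_sym.
apply: eq_n_comp => x y; apply/idP/idP; first exact/connect_mono/rem_edge_sub.
apply: connect_sub => a b eab; case fab: (rem_edge a b); first exact: connect1.
by case/orP: (rem_edge_removed eab (negbT fab)) => /andP[/eqP-> /eqP->];
  rewrite // sym_f.
Qed.

End RemoveEdge.

Definition acyclic (T : finType) (e : rel T) :=
  forall u v, e u v -> ~~ connect (rem_edge e u v) u v.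

Lemma acyclic_sub (T : finType) (e e' : rel T) :
  subrel e' e -> acyclic e -> acyclic e'.
Proof.
move=> sub acyc_e x y /sub exy; apply: contra (acyc_e x y exy).
by apply: connect_mono => a b /andP[/sub eab nab]; rewrite /rem_edge eab.
Qed.

Section CycleSpaceDimension.

Variable n : nat.
Implicit Types e : rel 'I_n.

Definition rem_vtx e (u : 'I_n) : rel 'I_n :=
  fun x y => [&& e x y, x != u & y != u].

Lemma simple_graph_sub e e' :
  simple_graph e -> symmetric e' -> subrel e' e -> simple_graph e'.
Proof. by move=> [_ irr_e] sym_e' sub; split=> // x; apply: contra (irr_e x) => /sub. Qed.

Lemma simple_graph_neq e u v : simple_graph e -> e u v -> u != v.
Proof. by move=> [_ irr_e] euv; apply: contraTneq euv => ->; apply: irr_e. Qed.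

Lemma simple_graph_rem_edge e u v : simple_graph e -> simple_graph (rem_edge e u v).
Proof.
move=> G; apply: simple_graph_sub G (rem_edge_sym u v G.1) _; exact: rem_edge_sub.
Qed.

Lemma simple_graph_rem_vtx e u : simple_graph e -> simple_graph (rem_vtx e u).
Proof.
move=> G; apply: (simple_graph_sub G) => [x y | x y /and3P[] //].
by rewrite /rem_vtx G.1 [(x != u) && _]andbC.
Qed.

Lemma ncompE e : ncomp e = n_comp e 'I_n.
Proof.
apply: eq_n_comp => x y.
apply/idP/idP; first exact: connect_sub.
by apply: connect_sub => a b /connect1/connect1.
Qed.

Lemma theta_eq e e' : e =2 e' -> theta e = theta e'.
Proof.
move=> ee'; rewrite /theta !ncompE (eq_n_comp (eq_connect ee')).
by congr (_ - _ + _); congr (_%:Z); apply: eq_card => p; rewrite !inE ee'.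
Qed.

Lemma nedges_rem_edge e u v : symmetric e -> e u v -> u != v ->
  nedges e = (nedges (rem_edge e u v)).+1.
Proof.
move=> sym_e euv uv; rewrite /nedges.
pose w := if (u < v)%N then (u, v) else (v, u).
have w_edge : w \in [set p : 'I_n * 'I_n | e p.1 p.2 && (p.1 < p.2)%N].
  rewrite inE /w; case: ltnP => [-> | ]; rewrite ?euv //= -sym_e euv ltn_neqAle eq_sym.
  by move=> ->; rewrite andbT.
rewrite (cardsD1 w) w_edge add1n; congr (_.+1); apply: eq_card => -[x y].
rewrite !inE /= /rem_edge /w; case: (e x y); rewrite ?andbF //=.
move: uv; rewrite -val_eqE /=; case: ltnP => uv_lt uv;
  rewrite !xpair_eqE -!val_eqE /=; apply/idP/idP; lia.
Qed.

Lemma theta_rem_edge e u v :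
  simple_graph e -> e u v -> theta (rem_edge e u v) <= theta e.
Proof.
move=> G euv; rewrite /theta !ncompE (nedges_rem_edge G.1 euv (simple_graph_neq G euv)).
(* stated at ['I_n] so that [lia] sees the same atoms as in the goal *)
have : (n_comp (rem_edge e u v) 'I_n <= (n_comp e 'I_n).+1)%N.
  exact: n_comp_rem_edge u v G.1.
lia.
Qed.

Lemma theta_rem_edge_cycle e u v : simple_graph e -> e u v ->
  connect (rem_edge e u v) u v -> theta (rem_edge e u v) < theta e.
Proof.
move=> G euv cuv; rewrite /theta !ncompE (nedges_rem_edge G.1 euv (simple_graph_neq G euv)).
have -> : n_comp (rem_edge e u v) 'I_n = n_comp e 'I_n.
  exact: n_comp_rem_edge_cycle G.1 cuv.
lia.
Qed.

Lemma theta_sub e e' :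
  simple_graph e -> symmetric e' -> subrel e' e -> theta e' <= theta e.
Proof.
move=> + sym_e'; elim/proper_subrel_ind: e => e IH G sub.
case: (pickP [pred p : 'I_n * 'I_n | e p.1 p.2 && ~~ e' p.1 p.2]) =>
    [[u v] /= /andP[euv e'uv] | no_extra].
  apply: le_trans (theta_rem_edge G euv); apply: (IH _ u v) => //.
  - exact: rem_edge_sub.
  - exact: rem_edge_notin.
  - exact: simple_graph_rem_edge.
  move=> x y e'xy; rewrite /rem_edge (sub _ _ e'xy) /=.
  by apply: contraNN e'uv => /orP[] /andP[/eqP<- /eqP<-]; rewrite // sym_e'.
rewrite (@theta_eq e e') // => x y; apply/idP/idP; last exact: sub.
by move=> exy; have := no_extra (x, y); rewrite /= exy => /negbFE.
Qed.

Lemma theta_rem_vtx_cycle e u v : simple_graph e -> e u v ->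
  connect (rem_edge e u v) u v -> theta (rem_vtx e u) < theta e.
Proof.
move=> G euv cycle_uv; apply: le_lt_trans (theta_rem_edge_cycle G euv cycle_uv).
apply: theta_sub (simple_graph_rem_edge u v G) (simple_graph_rem_vtx u G).1 _.
by move=> x y /and3P[exy xu yu]; rewrite /rem_edge exy (negbTE xu) (negbTE yu) andbF.
Qed.

Lemma theta_empty : theta (fun _ _ : 'I_n => false) = 0.
Proof.
rewrite /theta; set E := (X in nedges X).
have root_id x : fingraph.root E x = x.
  by rewrite /fingraph.root; case: pickP => // y /connectP[[|? ?] //= _ ->].
have -> : nedges E = 0%N.
  by apply/eqP; rewrite cards_eq0; apply/eqP/setP => p; rewrite !inE.
have -> : ncomp E = n.
  rewrite ncompE -[RHS]card_ord; apply: eq_card => x.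
  by rewrite !inE /roots root_id eqxx.
by rewrite add0r addNr.
Qed.

Lemma theta_ge0 e : simple_graph e -> 0 <= theta e.
Proof. by move=> G; rewrite -theta_empty; apply: theta_sub. Qed.

End CycleSpaceDimension.

Section VertexMask.

Variables (F : fieldType) (n : nat).

Definition vtx_mask (u : 'I_n) : 'M[F]_n := diag_mx (\row_i (i != u)%:R).

Lemma mxrank_vtx_mask (A : 'M[F]_n) u :
  (\rank A <= \rank (vtx_mask u *m A *m vtx_mask u) + 2)%N.
Proof.
pose Q : 'M[F]_n := diag_mx (\row_i (i == u)%:R).
have QE : Q = delta_mx u u.
  by apply/matrixP => i j; rewrite !mxE; case: eqVneq => [->|]; rewrite ?mul0rn // eq_sym.
have decomp : A = vtx_mask u *m A *m vtx_mask u + Q *m A + vtx_mask u *m A *m Q.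
  apply/matrixP => i j; rewrite !mul_mx_diag !mul_diag_mx !mxE.
  by case: (eqVneq i u) => [->|iu]; case: (eqVneq j u) => [->|ju];
    rewrite ?mul1r ?mulr1 ?mul0r ?mulr0 ?addr0 ?add0r.
have rank_QA : (\rank (Q *m A) <= 1)%N.
  by apply: leq_trans (mxrankM_maxl _ _) _; rewrite QE mxrank_delta.
have rank_AQ : (\rank (vtx_mask u *m A *m Q) <= 1)%N.
  by apply: leq_trans (mxrankM_maxr _ _) _; rewrite QE mxrank_delta.
rewrite {1}decomp; apply: leq_trans (mxrank_add _ _) _.
apply: leq_trans (leq_add (mxrank_add _ _) rank_AQ) _.
by rewrite -addnA leq_add2l (leq_add rank_QA).
Qed.

End VertexMask.

Section GainGraphs.

Variables (R : realType) (n : nat).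
Implicit Types (e : rel 'I_n) (phi psi : 'I_n -> 'I_n -> R[i]) (d : 'I_n -> R[i]).

Definition invertible_gain e phi :=
  forall i j, e i j -> phi i j != 0 /\ phi j i = (phi i j)^-1.

Definition switching d e phi psi :=
  forall i j, e i j -> psi i j = (d i)^-1 * phi i j * d j.

Lemma invertible_gain_sub e e' phi :
  subrel e' e -> invertible_gain e phi -> invertible_gain e' phi.
Proof. by move=> sub gain_phi i j /sub/gain_phi. Qed.

Lemma unit_gain_invertible e phi : unit_gain e phi -> invertible_gain e phi.
Proof.
move=> gain_phi i j /gain_phi[norm1 ->]; split=> //.
by rewrite -normr_eq0 norm1 oner_eq0.
Qed.

Lemma gain_adj_rem_vtx e phi u :
  gain_adj (rem_vtx e u) phi = vtx_mask _ u *m gain_adj e phi *m vtx_mask _ u.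
Proof.
apply/matrixP => i j; rewrite mul_diag_mx mul_mx_diag !mxE /rem_vtx.
by case: (eqVneq i u) => [->|iu]; case: (eqVneq j u) => [->|ju];
  rewrite ?andbF ?andbT ?mul1r ?mulr1 ?mul0r ?mulr0.
Qed.

Lemma mxrank_gain_adj_rem_vtx e phi u :
  (\rank (gain_adj (rem_vtx e u) phi) <= \rank (gain_adj e phi))%N.
Proof.
by rewrite gain_adj_rem_vtx; exact: leq_trans (mxrankM_maxl _ _) (mxrankM_maxr _ _).
Qed.

Lemma mxrank_gain_adj_le_rem_vtx e phi u :
  (\rank (gain_adj e phi) <= \rank (gain_adj (rem_vtx e u) phi) + 2)%N.
Proof. by rewrite gain_adj_rem_vtx; exact: mxrank_vtx_mask. Qed.

Lemma mxrank_gain_adj_switching d e phi psi : switching d e phi psi ->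
  (\rank (gain_adj e psi) <= \rank (gain_adj e phi))%N.
Proof.
move=> sw; have -> : gain_adj e psi =
    diag_mx (\row_i (d i)^-1) *m gain_adj e phi *m diag_mx (\row_i d i).
  apply/matrixP => i j; rewrite mul_diag_mx mul_mx_diag !mxE.
  by case eij: (e i j); rewrite ?sw ?mulr0 ?mul0r.
exact: leq_trans (mxrankM_maxl _ _) (mxrankM_maxr _ _).
Qed.

Lemma switching_add_bridge e u v d phi psi :
  symmetric e -> e u v -> ~~ connect (rem_edge e u v) u v ->
  invertible_gain e phi -> invertible_gain e psi ->
  (forall w, d w != 0) -> switching d (rem_edge e u v) phi psi ->
  exists2 d', forall w, d' w != 0 & switching d' e phi psi.
Proof.
move=> sym_e euv bridge gain_phi gain_psi d_nz sw.
have sym_f := sym_connect_sym (rem_edge_sym u v sym_e).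
have [phi_nz phi_vu] := gain_phi u v euv.
have [psi_nz psi_vu] := gain_psi u v euv.
(* rescale the side of the bridge containing [v] so that the gain of [uv] matches *)
pose c := psi u v * d u / (phi u v * d v).
have c_nz : c != 0 by rewrite /c !mulf_neq0 ?invr_neq0 ?mulf_neq0.
exists (fun w => if connect (rem_edge e u v) v w then c * d w else d w).
  by move=> w; case: ifP => _; [exact: mulf_neq0 | exact: d_nz].
have vu : ~~ connect (rem_edge e u v) v u by rewrite sym_f.
move=> i j eij; case fij: (rem_edge e u v i j).
  rewrite -(same_connect1r sym_f fij v) sw //.
  by case: ifP => _ //; rewrite invfM; field; rewrite c_nz !d_nz.
case/orP: (rem_edge_removed eij (negbT fij)) => /andP[/eqP-> /eqP->];
  rewrite (negbTE vu) connect0 /c ?phi_vu ?psi_vu; field; by rewrite ?phi_nz ?psi_nz !d_nz.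
Qed.

Lemma acyclic_switching e phi psi :
  symmetric e -> acyclic e -> invertible_gain e phi -> invertible_gain e psi ->
  exists2 d, forall w, d w != 0 & switching d e phi psi.
Proof.
elim/proper_subrel_ind: e => e IH sym_e acyc_e gain_phi gain_psi.
case: (pickP [pred p : 'I_n * 'I_n | e p.1 p.2]) => [[u v] /= euv | no_edge].
  have sub_uv : subrel (rem_edge e u v) e by apply: rem_edge_sub.
  have [d d_nz sw] := IH _ u v sub_uv euv (rem_edge_notin e u v)
    (rem_edge_sym u v sym_e) (acyclic_sub sub_uv acyc_e)
    (invertible_gain_sub sub_uv gain_phi) (invertible_gain_sub sub_uv gain_psi).
  exact: switching_add_bridge sym_e euv (acyc_e u v euv) gain_phi gain_psi d_nz sw.
exists (fun=> 1) => [w | i j eij]; first exact: oner_neq0.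
by have := no_edge (i, j); rewrite /= eij.
Qed.

Lemma mxrank_gain_adj_le e phi psi :
  simple_graph e -> invertible_gain e phi -> invertible_gain e psi ->
  (\rank (gain_adj e phi))%:Z <= (\rank (gain_adj e psi))%:Z + 2 * theta e.
Proof.
elim/proper_subrel_ind: e => e IH G gain_phi gain_psi.
case: (pickP [pred p : 'I_n * 'I_n | e p.1 p.2 && connect (rem_edge e p.1 p.2) p.1 p.2])
  => [[u v] /= /andP[euv cycle_uv] | no_cycle]; last first.
  have acyc_e : acyclic e by move=> u v euv; have := no_cycle (u, v); rewrite /= euv => /negbT.
  have [d _ sw] := acyclic_switching G.1 acyc_e gain_psi gain_phi.
  have := mxrank_gain_adj_switching sw; have := theta_ge0 G; lia.
have sub_u : subrel (rem_vtx e u) e by move=> x y /and3P[].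
have uv_out : ~~ rem_vtx e u u v by rewrite /rem_vtx eqxx andbF.
have := IH _ u v sub_u euv uv_out (simple_graph_rem_vtx u G)
  (invertible_gain_sub sub_u gain_phi) (invertible_gain_sub sub_u gain_psi).
have := mxrank_gain_adj_le_rem_vtx e phi u.
have := mxrank_gain_adj_rem_vtx e psi u.
have := theta_rem_vtx_cycle G euv cycle_uv; lia.
Qed.

End GainGraphs.

Unset Implicit Arguments.

Theorem theorem3p2 (R : realType) (n : nat) (adj : rel 'I_n)
  (phi : 'I_n -> 'I_n -> R[i]) :
  simple_graph adj -> unit_gain adj phi ->
  let rG : int := (\rank (adj01 R[i] adj))%:Z in
  let rPhi : int := (\rank (gain_adj adj phi))%:Z in
  rG - 2 * theta adj <= rPhi /\ rPhi <= rG + 2 * theta adj.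
Proof.
move=> G /unit_gain_invertible gain_phi rG rPhi.
have gain_one : invertible_gain adj (fun _ _ : 'I_n => 1 : R[i]).
  by move=> i j _; rewrite invr1 oner_neq0.
have adj01_gain : adj01 R[i] adj = gain_adj adj (fun _ _ => 1).
  by apply/matrixP => i j; rewrite !mxE.
have := mxrank_gain_adj_le G gain_phi gain_one.
have := mxrank_gain_adj_le G gain_one gain_phi.
rewrite /rG /rPhi adj01_gain; lia.
Qed.
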